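(* Let $S=(\mathcal{E},\Sigma,X,\mathcal{O})$ be an entity. Then $S$ is state determined (i.e. for $p,q\in\Sigma$, if $O(e,p)=O(e,q)$ for all $e\in\mathcal{E}$ then $p=q$) if and only if the state eigen closure operator $cl_{eig}$ on $\Sigma$ satisfies the $T_0$ separation axiom.
   Context: An entity $S=(\mathcal{E},\Sigma,X,\mathcal{O})$ consists of a set $\mathcal{E}$ (experiments), a set $\Sigma$ (states), and for each $e\in\mathcal{E}$, $p\in\Sigma$ a nonempty set $O(e,p)$, with $X=\bigcup_{e,p}O(e,p)$. Let $O(e)=\bigcup_{p\in\Sigma}O(e,p)$. For $e\in\mathcal{E}$ the eigen map $eig_e:\mathcal{P}(O(e))\to\mathcal{P}(\Sigma)$ is $p\in eig_e(A)\iff O(e,p)\subseteq A$, and $\mathcal{F}(e)=\{eig_e(A):A\subseteq O(e)\}$. The state eigen closure system $\mathcal{F}_{eig}$ is the set of all intersections $\bigcap_i A_i$ of families of elements $A_i\in\bigcup_{e\in\mathcal{E}}\mathcal{F}(e)$, and $cl_{eig}(K)=\bigcap\{F\in\mathcal{F}_{eig}:K\subseteq F\}$ for $K\subseteq\Sigma$. A closure operator $cl$ on $W$ satisfies $T_0$ iff $cl(\{w\})=cl(\{v\})$ implies $w=v$. *)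

(* sets are predicates (Prop-valued), equality of sets is
   extensional equivalence of membership. *)

Record entity := {
  Exp : Type;
  St : Type;
  Out : Type;                          (* ambient type of outcomes *)
  O : Exp -> St -> Out -> Prop;
  O_nonempty : forall e p, exists x, O e p x
}.

Definition outcomes (S : entity) : Out S -> Prop :=
  fun x => exists e p, O S e p x.

Definition Oe (S : entity) (e : Exp S) : Out S -> Prop :=
  fun x => exists p, O S e p x.

Definition eig (S : entity) (e : Exp S) (A : Out S -> Prop) : St S -> Prop :=
  fun p => forall x, O S e p x -> A x.

Definition Fe (S : entity) (e : Exp S) (F : St S -> Prop) : Prop :=
  exists A : Out S -> Prop, (forall x, A x -> Oe S e x) /\
    (forall p, F p <-> eig S e A p).

Definition Feig (S : entity) (F : St S -> Prop) : Prop :=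
  exists (I : Type) (A : I -> St S -> Prop),
    (forall i, exists e, Fe S e (A i)) /\
    (forall p, F p <-> forall i, A i p).

Definition cl_eig (S : entity) (K : St S -> Prop) : St S -> Prop :=
  fun p => forall F, Feig S F -> (forall q, K q -> F q) -> F p.

Definition singleton {T : Type} (w : T) : T -> Prop := fun v => v = w.

Definition set_eq {T : Type} (A B : T -> Prop) : Prop := forall x, A x <-> B x.

Definition T0 {W : Type} (cl : (W -> Prop) -> (W -> Prop)) : Prop :=
  forall w v : W, set_eq (cl (singleton w)) (cl (singleton v)) -> w = v.

Definition state_determined (S : entity) : Prop :=
  forall p q : St S, (forall e, set_eq (O S e p) (O S e q)) -> p = q.

(* The closure of a singleton {p} consists of the states q with
   O(e,q) ⊆ O(e,p) for every experiment e: each eig_e(O(e,p)) is a closed set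
   containing p, and every set eig_e(A) containing p contains all such q.
   Hence cl_eig{p} = cl_eig{q} exactly when O(e,p) = O(e,q) for all e, and the
   T0 axiom for cl_eig says literally that S is state determined. *)


Definition outcome_below (S : entity) (q p : St S) : Prop :=
  forall e x, O S e q x -> O S e p x.

Lemma Fe_eig (S : entity) (e : Exp S) (A : Out S -> Prop) :
  (forall x, A x -> Oe S e x) -> Fe S e (eig S e A).
Proof.
  intros HA. exists A. split; [exact HA | tauto].
Qed.

Lemma Feig_of_Fe (S : entity) (e : Exp S) (F : St S -> Prop) :
  Fe S e F -> Feig S F.
Proof.
  intros HF. exists unit, (fun _ => F). split.
  - intros _. exists e. exact HF.
  - intros p. split; [intros Hp _; exact Hp | intros Hp; exact (Hp tt)].
Qed.

Lemma Feig_eig_outcomes (S : entity) (e : Exp S) (p : St S) :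
  Feig S (eig S e (O S e p)).
Proof.
  apply (Feig_of_Fe S e), Fe_eig. intros x Hx. exists p. exact Hx.
Qed.

Lemma Feig_outcome_below (S : entity) (F : St S -> Prop) (p q : St S) :
  Feig S F -> F p -> outcome_below S q p -> F q.
Proof.
  intros [I [A [HA HF]]] Hp Hqp.
  apply HF. intros i. destruct (HA i) as [e [B [_ HB]]].
  assert (Hpi : eig S e B p) by (apply HB, HF, Hp).
  apply HB. intros x Hx. exact (Hpi x (Hqp e x Hx)).
Qed.

Lemma cl_eig_singleton (S : entity) (p q : St S) :
  cl_eig S (singleton p) q <-> outcome_below S q p.
Proof.
  split.
  - intros Hq e x Hx.
    assert (Hpe : forall r, singleton p r -> eig S e (O S e p) r)
      by (intros r Hr; rewrite Hr; intros y Hy; exact Hy).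
    exact (Hq _ (Feig_eig_outcomes S e p) Hpe x Hx).
  - intros Hqp F HF Hp. apply (Feig_outcome_below S F p q HF); auto.
    apply Hp. reflexivity.
Qed.

Lemma cl_eig_singleton_refl (S : entity) (p : St S) :
  cl_eig S (singleton p) p.
Proof.
  apply cl_eig_singleton. intros e x Hx. exact Hx.
Qed.

Lemma cl_eig_singleton_eq (S : entity) (p q : St S) :
  set_eq (cl_eig S (singleton p)) (cl_eig S (singleton q)) <->
  (forall e, set_eq (O S e p) (O S e q)).
Proof.
  split.
  - intros Hcl e x.
    assert (Hqp : outcome_below S q p)
      by apply cl_eig_singleton, (proj2 (Hcl q)), cl_eig_singleton_refl.
    assert (Hpq : outcome_below S p q)
      by apply cl_eig_singleton, (proj1 (Hcl p)), cl_eig_singleton_refl.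
    split; [apply Hpq | apply Hqp].
  - intros HO r.
    split; intros Hr; apply cl_eig_singleton; apply cl_eig_singleton in Hr;
      intros e x Hx; apply HO, (Hr e x Hx).
Qed.

Theorem mainTheorem3 (S : entity) :
  state_determined S <-> T0 (cl_eig S).
Proof.
  unfold state_determined, T0.
  split; intros H p q Hpq; apply H, cl_eig_singleton_eq, Hpq.
Qed.
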